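(* Let $\mathcal{P}$ be a finite poset and let $N\in\mathrm{vec}^{\operatorname{Int}\mathcal{P}}$ be such that for all $a\le b\le c\le d$ in $\mathcal{P}\cup\{\infty\}$ the structure morphism $N(a,b)\to N(c,d)$ is zero. Then for every integer $d>0$, \[ \operatorname{Tor}_d^{\mathbb{k}(\operatorname{Int}\mathcal{P})}\big(N,\ \mathbb{k}(\operatorname{Int}\mathcal{P})/(e)\big)=0 . \]
   Context: $\mathbb{k}$ is a field. $\mathcal{P}\cup\{\infty\}$ is $\mathcal{P}$ with a new maximum $\infty$. $\operatorname{Int}\mathcal{P}=\{(a,b):a\le b,\ a,b\in\mathcal{P}\cup\{\infty\}\}$ with the product order. For a finite poset $\mathcal{Q}$, the incidence algebra $\mathbb{k}\mathcal{Q}$ has vector space basis the pairs $[x,y]$ with $x\le y$ in $\mathcal{Q}$ and multiplication $[x,y][y,z]=[x,z]$, $[x,y][z,w]=0$ if $y\ne z$. A representation $N\in\mathrm{vec}^{\mathcal{Q}}$ is a right $\mathbb{k}\mathcal{Q}$-module via $x\cdot[p,q]=N(p\le q)(x)$ for $x\in N(p)$ (and $0$ on other components). Here $e\coloneqq\sum_{c}[(c,c),(c,c)]\in\mathbb{k}(\operatorname{Int}\mathcal{P})$, the sum over the diagonal elements $(c,c)$ of $\operatorname{Int}\mathcal{P}$, and $(e)$ is the two-sided ideal it generates; $\mathbb{k}(\operatorname{Int}\mathcal{P})/(e)$ is regarded as a left $\mathbb{k}(\operatorname{Int}\mathcal{P})$-module. *)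

(* Tor over the incidence algebra k(Int P), computed by the
   standard bar resolution over k. *)
From HB Require Import structures.
From mathcomp Require Import all_boot all_order all_algebra.
Set Implicit Arguments. Unset Strict Implicit. Unset Printing Implicit Defensive.
Import Order.TTheory GRing.Theory.
Local Open Scope ring_scope.

Section IncidenceTor.
Context (k : fieldType) {disp : Order.disp_t} (P : finPOrderType disp).

(* P ∪ {∞}: None plays the role of the new maximum ∞. *)
Definition leinf (a b : option P) : bool :=
  match a, b with
  | _, None => true
  | None, Some _ => false
  | Some x, Some y => (x <= y)%O
  end.

Definition IntP := {ab : option P * option P | leinf ab.1 ab.2}.
Definition leQ (s t : IntP) : bool :=
  leinf (val s).1 (val t).1 && leinf (val s).2 (val t).2.

(* Basis of the incidence algebra k(Int P): pairs [s,t] with s <= t. *)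
Definition BA := {st : IntP * IntP | leQ st.1 st.2}.

(* structure constants: [s,t][t',u] = [s,u] if t = t', else 0 *)
Definition mulA (b c d : BA) : k :=
  if ((val b).2 == (val c).1) && ((val d).1 == (val b).1)
     && ((val d).2 == (val c).2) then 1 else 0.
Definition mulAo (b c d : option BA) : k :=
  match b, c, d with Some b, Some c, Some d => mulA b c d | _, _, _ => 0 end.

(* A representation N in vec^{Int P}: N(s) = k^(rdim s) (row vectors),
   N(s <= t) : x |-> x *m rmap s t. *)
Record rep := Rep {
  rdim : IntP -> nat;
  rmap : forall s t : IntP, 'M[k]_(rdim s, rdim t);
  rmap_id : forall s, rmap s s = 1%:M;
  rmap_comp : forall s t u, leQ s t -> leQ t u ->
      rmap s t *m rmap t u = rmap s u }.

Variable N : rep.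

(* basis of N as a vector space: pairs (s, i) with i < dim N(s) *)
Definition BN := {s : IntP & 'I_(rdim N s)}.

(* right module structure: coefficient of n' in n . b *)
Definition actN (n : BN) (b : BA) (n' : BN) : k :=
  if (tag n == (val b).1) && (tag n' == (val b).2)
  then rmap N (tag n) (tag n') (tagged n) (tagged n') else 0.

(* elements of the algebra as coefficient vectors; product; idempotent e;
   two-sided ideal (e). *)
Definition mulv (x y : BA -> k) : BA -> k :=
  fun d => \sum_(b : BA) \sum_(c : BA) x b * y c * mulA b c d.
Definition basisv (b : BA) : BA -> k := fun c => (c == b)%:R.
Definition evec : BA -> k := fun b =>
  if ((val b).1 == (val b).2) && ((val (val b).1).1 == (val (val b).1).2)
  then 1 else 0.
Definition inI (x : BA -> k) : Prop :=
  exists cf : BA -> BA -> k, forall d,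
    x d = \sum_(b : BA) \sum_(c : BA) cf b c * mulv (mulv (basisv b) evec) (basisv c) d.

(* Bar complex C_d = N ⊗_k A^{⊗ d} ⊗_k A (coordinates), with M = A a left
   module over itself; the quotient A/(e) is handled by working modulo
   N ⊗ A^{⊗ d} ⊗ (e). *)
Definition chain (d : nat) := BN -> d.-tuple BA -> BA -> k.

Definition bcoef (d : nat) (n : BN) (t : (d.+1).-tuple BA) (m : BA)
    (n' : BN) (t' : d.-tuple BA) (m' : BA) : k :=
  actN n (thead t) n' * ((val t' == behead t) && (m' == m))%:R
  + \sum_(j < d) (-1) ^+ j.+1 *
      (((n' == n) && (m' == m) && (take j t' == take j t)
         && (drop j.+1 t' == drop j.+2 t))%:R
       * mulAo (onth t j) (onth t j.+1) (onth t' j))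
  + (-1) ^+ d.+1 * (((n' == n) && (val t' == take d t))%:R
       * mulA (tnth t ord_max) m m').

Definition bd (d : nat) (v : chain d.+1) : chain d := fun n' t' m' =>
  \sum_(n : BN) \sum_(t : (d.+1).-tuple BA) \sum_(m : BA)
     v n t m * bcoef n t m n' t' m'.

Definition inIchain (d : nat) (v : chain d) : Prop := forall n t, inI (v n t).

Definition cycI (d : nat) : chain d -> Prop :=
  match d with 0 => fun _ => True | d'.+1 => fun v => inIchain (bd v) end.

Definition TorVanish (d : nat) : Prop :=
  forall v : chain d, cycI v ->
    exists w : chain d.+1, inIchain (fun n t m => v n t m - bd w n t m).

End IncidenceTor.

From Pilot Require Import Defs.
From HB Require Import structures.
From mathcomp Require Import all_boot all_order all_algebra ring zify.
From Stdlib Require Import FunctionalExtensionality.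
Set Implicit Arguments. Unset Strict Implicit. Unset Printing Implicit Defensive.
Import Order.TTheory GRing.Theory.
Local Open Scope ring_scope.

(* [Tor_d(N, A/(e))], with [A = k(Int P)], is the homology in degree [d] of the bar
   complex [N ⊗ A^⊗• ⊗ A] taken modulo [N ⊗ A^⊗• ⊗ (e)]; a basis element [[x, y]]
   of [A] lies in (e) iff [x.2 <= y.1], i.e. iff it factors through a diagonal point.
   The extra degeneracy [h (n ⊗ a ⊗ m) = n ⊗ a ⊗ m ⊗ 1] satisfies [dh + hd = id],
   but on the quotient it must vanish when [m] lies in (e), and then [dh + hd = id]
   fails on [n ⊗ a ⊗ m] by the missing term [h (n ⊗ a' ⊗ a_d m)] whenever
   [a_d m] lies in (e) (here [a = a' ⊗ a_d]).  Factor [a_d m = l r] through the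
   diagonal: the boundary of the correction [n ⊗ a' ⊗ l ⊗ r ⊗ 1] contains that
   term, its last face lies in (e), and its other faces are the corrections of
   the other faces of [n ⊗ a ⊗ m], except the face [n l ⊗ r ⊗ 1] in degree 1.
   That one vanishes because the hypothesis on [N] with [a = b = c = d] forces [N]
   to be zero on the diagonal.  So [h] minus the correction is a contracting
   homotopy modulo (e) in positive degrees. *)

Lemma sum_delta (R : pzSemiRingType) (T : finType) (j : T) (F : T -> R) :
  \sum_i ((i == j)%:R * F i) = F j.
Proof.
rewrite (bigD1 j) //= eqxx mul1r big1 ?addr0 // => i /negbTE->.
by rewrite mul0r.
Qed.

Lemma onth_nth_lt (T : Type) (x0 : T) (s : seq T) j :
  (j < size s)%N -> onth s j = Some (nth x0 s j).
Proof. by elim: s j => [|x s IH] [|j] //= /IH. Qed.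

Section Merge.
Variable T : Type.
Implicit Types (s : seq T) (x c : T).

Definition merge j c s := take j s ++ c :: drop j.+2 s.

Lemma nth_rcons_lt x0 s x i : (i < size s)%N -> nth x0 (rcons s x) i = nth x0 s i.
Proof. by move=> h; rewrite nth_rcons h. Qed.

Lemma nth_rcons_size x0 s x i : size s = i -> nth x0 (rcons s x) i = x.
Proof. by move=> <-; rewrite nth_rcons ltnn eqxx. Qed.

Lemma behead_rcons s x : (0 < size s)%N -> behead (rcons s x) = rcons (behead s) x.
Proof. by case: s. Qed.

Lemma size_merge j c s : (j.+1 < size s)%N -> size (merge j c s) = (size s).-1.
Proof. by move=> h; rewrite size_cat /= size_take size_drop; case: ltnP; lia. Qed.

Lemma take_rcons_le s x i : (i <= size s)%N -> take i (rcons s x) = take i s.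
Proof.
move=> h; rewrite -cats1 take_cat; case: ltnP => // h2.
have -> : i = size s by apply/eqP; rewrite eqn_leq h h2.
by rewrite subnn take0 cats0 take_size.
Qed.

Lemma merge_rcons s x j c : (j.+2 <= size s)%N ->
  merge j c (rcons s x) = rcons (merge j c s) x.
Proof.
by move=> h; rewrite /merge take_rcons_le ?drop_rcons ?rcons_cat //; lia.
Qed.

Lemma merge_rcons2 s a x c i : size s = i -> merge i c (rcons (rcons s a) x) = rcons s c.
Proof.
move=> <-; rewrite /merge !take_rcons_le ?size_rcons // take_size.
by rewrite drop_oversize ?size_rcons // cats1.
Qed.

Lemma merge_rcons3 s x y z c :
  merge (size s) c (rcons (rcons (rcons s x) y) z) = rcons (rcons s c) z.
Proof. by elim: s => //= x0 s; rewrite /merge /= => ->. Qed.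

End Merge.

Lemma merge_eq (U : eqType) (x0 : U) (t s : seq U) j (c : U) :
  size t = (size s).-1 -> (j.+1 < size s)%N ->
  (take j t == take j s) && (drop j.+1 t == drop j.+2 s) && (c == nth x0 t j)
  = (t == merge j c s).
Proof.
move=> ht hj; have hjt : (j < size t)%N by rewrite ht; lia.
rewrite /merge; apply/idP/eqP => [/andP[/andP[/eqP <- /eqP <-] /eqP ->]|->].
  by rewrite -drop_nth // cat_take_drop.
have hs : size (take j s) = j by rewrite size_takel //; lia.
rewrite take_size_cat // drop_cat hs ltnNge leqnSn /= subSnn /= drop0.
by rewrite nth_cat hs ltnn subnn !eqxx.
Qed.

(** * The basis of the incidence algebra [k(Int P)] *)

Section Basis.
Variables (disp : Order.disp_t) (P : finPOrderType disp).
Local Notation IntP := (IntP P).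
Local Notation BA := (BA P).
Implicit Types (s t u y : IntP) (b c d m : BA).

Lemma leinf_refl (a : option P) : leinf a a.
Proof. by case: a => //= x; exact: Order.POrderTheory.le_refl. Qed.

Lemma leinf_trans (a b c : option P) : leinf a b -> leinf b c -> leinf a c.
Proof.
by case: a => [x|]; case: b => [y|]; case: c => [z|] //=; exact: le_trans.
Qed.

Lemma leQ_refl s : leQ s s.
Proof. by rewrite /leQ !leinf_refl. Qed.

Lemma leQ_trans s t u : leQ s t -> leQ t u -> leQ s u.
Proof.
move=> /andP[h1 h2] /andP[h3 h4].
by rewrite /leQ (leinf_trans h1 h3) (leinf_trans h2 h4).
Qed.

Definition src m : IntP := (val m).1.
Definition tgt m : IntP := (val m).2.

Lemma leQ_src_tgt m : leQ (src m) (tgt m).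
Proof. exact: (valP m). Qed.

Lemma BA_eq b c : (b == c) = (src b == src c) && (tgt b == tgt c).
Proof.
apply/eqP/andP => [->//|[/eqP h1 /eqP h2]]; apply: val_inj.
by move: h1 h2; rewrite /src /tgt; case: (val b); case: (val c) => ? ? ? ? /= -> ->.
Qed.

Lemma BA_ext b c : src b = src c -> tgt b = tgt c -> b = c.
Proof. by move=> h1 h2; apply/eqP; rewrite BA_eq h1 h2 !eqxx. Qed.

(* Only used as a default value, for [insubd] and [nth]. *)
Definition ba0 : BA := exist _ (exist _ (None, None) isT, exist _ (None, None) isT) isT.

Definition mkBA s t : BA := insubd ba0 (s, t).

Lemma src_mkBA s t : leQ s t -> src (mkBA s t) = s.
Proof. by move=> h; rewrite /src /mkBA insubdK. Qed.

Lemma tgt_mkBA s t : leQ s t -> tgt (mkBA s t) = t.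
Proof. by move=> h; rewrite /tgt /mkBA insubdK. Qed.

Definition prodA b c : option BA :=
  if tgt b == src c then Some (mkBA (src b) (tgt c)) else None.

Lemma leQ_comp b c : tgt b = src c -> leQ (src b) (tgt c).
Proof. by move=> h; apply: leQ_trans (leQ_src_tgt b) _; rewrite h leQ_src_tgt. Qed.

Lemma prodA_Some b c d : prodA b c = Some d ->
  [/\ tgt b = src c, src d = src b & tgt d = tgt c].
Proof.
rewrite /prodA; case: eqP => // h [<-].
by rewrite src_mkBA ?tgt_mkBA //; apply: leQ_comp.
Qed.

Lemma prodA_None b c : (prodA b c == None) = (tgt b != src c).
Proof. by rewrite /prodA; case: (tgt b =P src c). Qed.

Lemma prodA_defined b c : tgt b = src c ->
  exists2 d, prodA b c = Some d & src d = src b /\ tgt d = tgt c.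
Proof.
move=> h; case e: (prodA b c) => [d|]; last by move: e; rewrite /prodA h eqxx.
by exists d => //; have [] := prodA_Some e.
Qed.

Lemma prodA_assoc a b c bc ab : prodA b c = Some bc -> prodA a b = Some ab ->
  exists f, prodA ab c = Some f /\ prodA a bc = Some f.
Proof.
move=> /prodA_Some[t1 s1 u1] /prodA_Some[t2 s2 u2].
have [f -> [sf tf]] := prodA_defined (etrans u2 t1).
have [g -> [sg tg]] := prodA_defined (etrans t2 (esym s1)).
by exists f; split; congr Some; apply: BA_ext; rewrite ?sg ?sf ?s2 ?tg ?tf ?u1.
Qed.

Lemma prodA_undefl a b c bc : prodA b c = Some bc -> prodA a b = None ->
  prodA a bc = None.
Proof. by move=> /prodA_Some[_ s1 _] /eqP; rewrite prodA_None -s1 -prodA_None => /eqP. Qed.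

Lemma prodA_undefr a b c ab : prodA b c = None -> prodA a b = Some ab ->
  prodA ab c = None.
Proof. by move=> /eqP + /prodA_Some[_ _ u]; rewrite prodA_None -u -prodA_None => /eqP. Qed.

Lemma mulA_prodA (k : fieldType) b c d : Defs.mulA k b c d = (prodA b c == Some d)%:R.
Proof.
rewrite /Defs.mulA /prodA -/(src b) -/(tgt b) -/(src c) -/(tgt c) -/(src d) -/(tgt d).
case: eqP => h //=; have hl := leQ_comp h.
rewrite [Some _ == _]/eq_op /= BA_eq src_mkBA // tgt_mkBA //.
by rewrite [src b == _]eq_sym [tgt c == _]eq_sym; case: (_ && _).
Qed.

Definition idt m : BA := mkBA (tgt m) (tgt m).

Lemma src_idt m : src (idt m) = tgt m.
Proof. by rewrite src_mkBA ?leQ_refl. Qed.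

Lemma tgt_idt m : tgt (idt m) = tgt m.
Proof. by rewrite tgt_mkBA ?leQ_refl. Qed.

Lemma eq_idt b c : tgt b = tgt c -> idt b = idt c.
Proof. by rewrite /idt => ->. Qed.

Lemma prodA_idt b : prodA b (idt b) = Some b.
Proof.
rewrite /prodA src_idt eqxx tgt_idt; congr Some.
by apply: BA_ext; rewrite ?src_mkBA ?tgt_mkBA ?leQ_src_tgt.
Qed.

Definition idealb m : bool := leinf (val (src m)).2 (val (tgt m)).1.

Lemma idealbMl b c d : prodA b c = Some d -> idealb c -> idealb d.
Proof.
move=> /prodA_Some[t1 s1 u1]; rewrite /idealb s1 u1 => h.
have /andP[_ l] := leQ_src_tgt b.
by apply: leinf_trans l _; rewrite t1.
Qed.

Lemma idealbMr b c d : prodA b c = Some d -> idealb b -> idealb d.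
Proof.
move=> /prodA_Some[t1 s1 u1]; rewrite /idealb s1 u1 => h.
by apply: leinf_trans h _; rewrite t1; have /andP[] := leQ_src_tgt c.
Qed.

Definition is_diag y : bool := (val y).1 == (val y).2.

Definition diag_fst y : IntP := exist _ ((val y).1, (val y).1) (leinf_refl _).

Definition lfact m : BA := mkBA (src m) (diag_fst (tgt m)).
Definition rfact m : BA := mkBA (diag_fst (tgt m)) (tgt m).

Lemma leQ_lfact c : idealb c -> leQ (src c) (diag_fst (tgt c)).
Proof.
move=> hI; rewrite /leQ /=; apply/andP; split; last exact: hI.
by have /andP[] := leQ_src_tgt c.
Qed.

Lemma leQ_rfact c : leQ (diag_fst (tgt c)) (tgt c).
Proof. by rewrite /leQ /= leinf_refl (valP (tgt c)). Qed.

Lemma src_lfact c : idealb c -> src (lfact c) = src c.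
Proof. by move=> h; rewrite src_mkBA ?leQ_lfact. Qed.

Lemma tgt_lfact c : idealb c -> tgt (lfact c) = diag_fst (tgt c).
Proof. by move=> h; rewrite tgt_mkBA ?leQ_lfact. Qed.

Lemma src_rfact c : src (rfact c) = diag_fst (tgt c).
Proof. by rewrite src_mkBA ?leQ_rfact. Qed.

Lemma tgt_rfact c : tgt (rfact c) = tgt c.
Proof. by rewrite tgt_mkBA ?leQ_rfact. Qed.

Lemma is_diag_tgt_lfact c : idealb c -> is_diag (tgt (lfact c)).
Proof. by move=> h; rewrite tgt_lfact // /is_diag /= eqxx. Qed.

Lemma eq_rfact b c : tgt b = tgt c -> rfact b = rfact c.
Proof. by rewrite /rfact => ->. Qed.

Lemma prodA_fact c : idealb c -> prodA (lfact c) (rfact c) = Some c.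
Proof.
move=> hI; rewrite /prodA tgt_lfact // src_rfact eqxx src_lfact // tgt_rfact.
by congr Some; apply: BA_ext; rewrite ?src_mkBA ?tgt_mkBA ?leQ_src_tgt.
Qed.

Lemma idealb_rfact c : idealb (rfact c).
Proof. by rewrite /idealb src_rfact tgt_rfact /= leinf_refl. Qed.

Lemma prodA_lfact a c f : idealb c -> prodA a c = Some f ->
  prodA a (lfact c) = Some (lfact f).
Proof.
move=> hc hf; have [t1 s1 u1] := prodA_Some hf.
have [|g -> [sg tg]] := @prodA_defined a (lfact c); first by rewrite src_lfact.
congr Some; apply: BA_ext; first by rewrite sg !src_lfact ?(idealbMl hf).
by rewrite tg !tgt_lfact ?u1 ?(idealbMl hf).
Qed.

Lemma prodA_lfact_undef a b m c : prodA b m = Some c -> idealb c -> prodA a b = None ->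
  prodA a (lfact c) = None.
Proof.
move=> /prodA_Some[_ s1 _] hc /eqP.
by rewrite prodA_None -s1 -(src_lfact hc) -prodA_None => /eqP.
Qed.

End Basis.
Arguments ba0 {disp P}.

(** * The ideal (e) *)

Section IdealSupport.
Variables (k : fieldType) (disp : Order.disp_t) (P : finPOrderType disp).
Local Notation BA := (BA P).
Local Notation evec := (@evec k disp P).
Local Notation mulA := (Defs.mulA k).

Lemma evecE c : evec c = ((src c == tgt c) && is_diag (src c))%:R.
Proof. by rewrite /evec; case: (_ && _). Qed.

Let egen b c := mulv (mulv (basisv k b) evec) (basisv k c).

Lemma egenE b c d :
  egen b c d = \sum_b' \sum_c' evec c' * mulA b c' b' * mulA b' c d.
Proof.
rewrite /egen /mulv; apply: eq_bigr => b' _.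
under eq_bigr => c0 _ do rewrite /basisv mulrAC mulrC.
rewrite sum_delta -mulr_suml; congr (_ * _).
rewrite exchange_big /=; apply: eq_bigr => c1 _.
by under eq_bigr => b0 _ do rewrite /basisv -mulrA; rewrite sum_delta.
Qed.

Lemma egen_ideal b c d : ~~ idealb d -> egen b c d = 0.
Proof.
rewrite egenE => hd; apply: big1 => b' _; apply: big1 => c' _.
rewrite evecE !mulA_prodA.
case h1: (prodA b c' == Some b'); last by rewrite mulr0 mul0r.
case h2: (prodA b' c == Some d); last by rewrite mulr0.
case/boolP: (_ && _) => [/andP[/eqP e1 /eqP e2]|]; last by rewrite !mul0r.
case/negP: hd.
have [t1 s1 u1] := prodA_Some (eqP h1); have [t2 s2 u2] := prodA_Some (eqP h2).
rewrite /idealb s2 s1 u2.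
have /andP[_ l1] := leQ_src_tgt b; have /andP[l2 _] := leQ_src_tgt c.
by apply: leinf_trans l1 _; rewrite t1 -e2 e1 -u1 t2.
Qed.

Lemma sum_evec_mulA b b' : is_diag (tgt b) ->
  \sum_c' evec c' * mulA b c' b' = (b' == b)%:R.
Proof.
move=> hdg; rewrite (bigD1 (idt b)) //= big1 ?addr0.
  by rewrite evecE mulA_prodA prodA_idt src_idt tgt_idt eqxx hdg mul1r eq_sym.
move=> c' hc; rewrite evecE mulA_prodA.
case/boolP: (_ && _) => [/andP[/eqP e1 _]|]; last by rewrite mul0r.
case h1: (prodA b c' == Some b'); last by rewrite mulr0.
have [t1 _ _] := prodA_Some (eqP h1).
by case/eqP: hc; apply: BA_ext; rewrite ?src_idt ?tgt_idt -?e1 t1.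
Qed.

Lemma egen_fact m d : idealb m -> egen (lfact m) (rfact m) d = (d == m)%:R.
Proof.
move=> hI; rewrite egenE.
under eq_bigr => b' _ do rewrite -mulr_suml sum_evec_mulA ?is_diag_tgt_lfact //.
by rewrite sum_delta mulA_prodA prodA_fact // eq_sym.
Qed.

Lemma inIP (x : BA -> k) : inI x <-> forall m, ~~ idealb m -> x m = 0.
Proof.
split=> [[cf hx] m hm|hx].
  by rewrite hx; apply: big1 => b _; apply: big1 => c _; rewrite -/(egen b c) egen_ideal ?mulr0.
(* Each [m] in (e) is the generator [lfact m * e * rfact m]. *)
exists (fun b c => \sum_(m | idealb m) x m * ((b == lfact m)%:R * (c == rfact m)%:R)).
move=> d; rewrite -/(egen _ _ _); symmetry.
transitivity (\sum_b \sum_c \sum_(m | idealb m)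
    (b == lfact m)%:R * ((c == rfact m)%:R * (x m * egen b c d))).
  apply: eq_bigr => b _; apply: eq_bigr => c _; rewrite mulr_suml.
  by apply: eq_bigr => m _; rewrite -/(egen b c); ring.
transitivity (\sum_(m | idealb m) x m * egen (lfact m) (rfact m) d).
  rewrite exchange_big /=; under eq_bigr do rewrite exchange_big /=.
  rewrite exchange_big /=; apply: eq_bigr => m _; rewrite exchange_big /=.
  by under eq_bigr do rewrite -mulr_sumr; rewrite !sum_delta.
under eq_bigr => m hm do rewrite egen_fact //.
case hd: (idealb d).
  rewrite (bigD1 d) //= eqxx mulr1 big1 ?addr0 // => m /andP[_ hm].
  by rewrite eq_sym (negbTE hm) mulr0.
rewrite hx ?hd // big1 // => m hm.
by case: eqP => [e|]; [rewrite e hm in hd | rewrite mulr0].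
Qed.

End IdealSupport.

(** * The bar complex *)

Section BarComplex.
Variables (k : fieldType) (disp : Order.disp_t) (P : finPOrderType disp) (N : rep k P).
Local Notation BA := (BA P).
Local Notation BN := (BN N).
Local Notation chain := (chain N).

Lemma chain_ext e (v w : chain e) : (forall n t m, v n t m = w n t m) -> v = w.
Proof.
move=> h; apply: functional_extensionality => n.
by apply: functional_extensionality => t; apply: functional_extensionality => m.
Qed.

Local Unset Implicit Arguments.
(* [cdelta e n s m] is the basis vector [n ⊗ s ⊗ m]; it is [0] unless [size s = e]. *)
Definition cdelta e (n : BN) (s : seq BA) (m : BA) : chain e :=
  fun n' t' m' => ((n' == n) && (val t' == s) && (m' == m))%:R.
Definition czero e : chain e := fun _ _ _ => 0.
Definition cadd e (v w : chain e) : chain e := fun n t m => v n t m + w n t m.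
Definition cscale e (c : k) (v : chain e) : chain e := fun n t m => c * v n t m.
Definition csum e (I : finType) (F : I -> chain e) : chain e :=
  fun n t m => \sum_i F i n t m.
Local Set Implicit Arguments.
Arguments cadd {e}. Arguments cscale {e}. Arguments csum {e I}.

Lemma add0c e (v : chain e) : cadd (czero e) v = v.
Proof. by apply: chain_ext => n t m; rewrite /cadd add0r. Qed.

Lemma cscale0 e c : cscale c (czero e) = czero e.
Proof. by apply: chain_ext => n t m; rewrite /cscale mulr0. Qed.

Lemma caddA e (u v w : chain e) : cadd u (cadd v w) = cadd (cadd u v) w.
Proof. by apply: chain_ext => n t m; rewrite /cadd addrA. Qed.

Definition chain_map e f (K : BN -> e.-tuple BA -> BA -> chain f) (v : chain e) : chain f :=
  fun n' t' m' => \sum_n \sum_t \sum_m v n t m * K n t m n' t' m'.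

Lemma bdE d (v : chain d.+1) : bd v = chain_map (@bcoef _ _ _ N d) v.
Proof. by []. Qed.

Section ChainMap.
Variables (e f : nat) (K : BN -> e.-tuple BA -> BA -> chain f).

Lemma chain_map_czero : chain_map K (czero e) = czero f.
Proof.
apply: chain_ext => n' t' m'; rewrite /chain_map big1 // => n _.
by rewrite big1 // => t _; rewrite big1 // => m _; rewrite mul0r.
Qed.

Lemma chain_map_cadd v w : chain_map K (cadd v w) = cadd (chain_map K v) (chain_map K w).
Proof.
apply: chain_ext => n' t' m'; rewrite /chain_map /cadd -big_split.
apply: eq_bigr => n _; rewrite -big_split; apply: eq_bigr => t _.
by rewrite -big_split; apply: eq_bigr => m _; rewrite mulrDl.
Qed.

Lemma chain_map_cscale c v : chain_map K (cscale c v) = cscale c (chain_map K v).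
Proof.
apply: chain_ext => n' t' m'; rewrite /chain_map /cscale mulr_sumr.
apply: eq_bigr => n _; rewrite mulr_sumr; apply: eq_bigr => t _.
by rewrite mulr_sumr; apply: eq_bigr => m _; rewrite mulrA.
Qed.

Lemma chain_map_csum (I : finType) (F : I -> chain e) :
  chain_map K (csum F) = csum (fun i => chain_map K (F i)).
Proof.
apply: chain_ext => n' t' m'; rewrite /chain_map /csum.
under eq_bigr do under eq_bigr do (under eq_bigr do rewrite mulr_suml; rewrite exchange_big /=).
by under eq_bigr do rewrite exchange_big /=; rewrite exchange_big.
Qed.

Lemma chain_map_oapp (o : option BA) (g : BA -> chain e) :
  chain_map K (oapp g (czero e) o) = oapp (fun c => chain_map K (g c)) (czero f) o.
Proof. by case: o => //=; rewrite chain_map_czero. Qed.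

Lemma chain_map_delta n s m (hs : size s = e) :
  chain_map K (cdelta e n s m) = K n (Tuple (introT eqP hs)) m.
Proof.
apply: chain_ext => n' t' m'.
rewrite /chain_map /cdelta (bigD1 n) //= [X in _ + X]big1 ?addr0.
  rewrite (bigD1 (Tuple (introT eqP hs))) //= [X in _ + X]big1 ?addr0.
    rewrite (bigD1 m) //= [X in _ + X]big1 ?addr0; first by rewrite !eqxx mul1r.
    by move=> m0 /negbTE hm; rewrite hm andbF mul0r.
  move=> t ht; apply: big1 => m0 _.
  by rewrite -val_eqE /= in ht; rewrite (negbTE ht) andbF mul0r.
by move=> n0 /negbTE hn; apply: big1 => t _; apply: big1 => m0 _; rewrite hn mul0r.
Qed.

Lemma chain_map_delta_size n s m : size s != e -> chain_map K (cdelta e n s m) = czero f.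
Proof.
move=> hs; apply: chain_ext => n' t' m'; apply: big1 => n0 _; apply: big1 => t _.
apply: big1 => m0 _; rewrite /cdelta.
case: (val t =P s) => [ht|_]; first by rewrite -ht size_tuple eqxx in hs.
by rewrite andbF mul0r.
Qed.

End ChainMap.

Lemma chain_map_comp e f g (K : BN -> f.-tuple BA -> BA -> chain g)
    (L : BN -> e.-tuple BA -> BA -> chain f) v :
  chain_map K (chain_map L v) = chain_map (fun n t m => chain_map K (L n t m)) v.
Proof.
apply: chain_ext => n' t' m'; rewrite /chain_map.
under eq_bigr do under eq_bigr do under eq_bigr do (rewrite mulr_suml;
  under eq_bigr do (rewrite mulr_suml; under eq_bigr do rewrite mulr_suml)).
do 3 (under eq_bigr do under eq_bigr do rewrite exchange_big;
      under eq_bigr do rewrite exchange_big;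
      rewrite exchange_big; apply: eq_bigr => ? _).
rewrite mulr_sumr; apply: eq_bigr => n _; rewrite mulr_sumr; apply: eq_bigr => t _.
by rewrite mulr_sumr; apply: eq_bigr => m _; rewrite mulrA.
Qed.

Lemma chain_map_cdelta e (v : chain e) :
  chain_map (fun n t m => cdelta e n (val t) m) v = v.
Proof.
apply: chain_ext => n t m; rewrite /chain_map /cdelta.
transitivity (\sum_n0 (n0 == n)%:R * \sum_t0 (t0 == t)%:R *
                \sum_m0 (m0 == m)%:R * v n0 t0 m0); last by rewrite !sum_delta.
apply: eq_bigr => n0 _; rewrite mulr_sumr; apply: eq_bigr => t0 _.
rewrite !mulr_sumr; apply: eq_bigr => m0 _.
rewrite val_eqE (eq_sym n) (eq_sym t) (eq_sym m).
by case: (n0 == n); case: (t0 == t); case: (m0 == m); rewrite /= ?mulr1 ?mul1r ?mulr0 ?mul0r.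
Qed.

Lemma chain_map_add e f (K L : BN -> e.-tuple BA -> BA -> chain f) v n t m :
  chain_map K v n t m + chain_map L v n t m =
  chain_map (fun n0 t0 m0 => cadd (K n0 t0 m0) (L n0 t0 m0)) v n t m.
Proof.
rewrite /chain_map -big_split; apply: eq_bigr => n0 _; rewrite -big_split.
by apply: eq_bigr => t0 _; rewrite -big_split; apply: eq_bigr => m0 _; rewrite /cadd mulrDr.
Qed.

Lemma eq_chain_map_at e f (K L : BN -> e.-tuple BA -> BA -> chain f) v n t m :
  (forall n0 t0 m0, K n0 t0 m0 n t m = L n0 t0 m0 n t m) ->
  chain_map K v n t m = chain_map L v n t m.
Proof.
move=> h; apply: eq_bigr => n0 _; apply: eq_bigr => t0 _; apply: eq_bigr => m0 _.
by rewrite h.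
Qed.

Lemma bd_czero d : bd (czero d.+1) = czero d.
Proof. exact: chain_map_czero. Qed.

Lemma bd_cadd d (v w : chain d.+1) : bd (cadd v w) = cadd (bd v) (bd w).
Proof. exact: chain_map_cadd. Qed.

Lemma bd_cscale d c (v : chain d.+1) : bd (cscale c v) = cscale c (bd v).
Proof. exact: chain_map_cscale. Qed.

Lemma bd_oapp d o (g : BA -> chain d.+1) :
  bd (oapp g (czero d.+1) o) = oapp (fun c => bd (g c)) (czero d) o.
Proof. exact: chain_map_oapp. Qed.

Lemma oapp_chainE e o (g : BA -> chain e) n t m :
  oapp g (czero e) o n t m = oapp (fun c => g c n t m) 0 o.
Proof. by case: o. Qed.

(* The faces of the bar differential, [d_0], [sum_(0 < j <= r) (-1)^j d_j] and
   [(-1)^(r+1) d_(r+1)], with each resulting basis element [n ⊗ s ⊗ m] replaced by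
   an arbitrary chain [F n s m]. *)
Section Faces.
Variables (f : nat) (F : BN -> seq BA -> BA -> chain f).

Definition dfirst n s m : chain f :=
  csum (fun n'' => cscale (actN n (nth ba0 s 0) n'') (F n'' (behead s) m)).

Definition dinner r n s m : chain f :=
  csum (fun j : 'I_r => cscale ((-1) ^+ j.+1)
    (oapp (fun c => F n (merge j c s) m) (czero f) (prodA (nth ba0 s j) (nth ba0 s j.+1)))).

Definition dlast r n s m : chain f :=
  cscale ((-1) ^+ r.+1) (oapp (fun c => F n (take r s) c) (czero f) (prodA (nth ba0 s r) m)).

Lemma dinnerS r n s m : dinner r.+1 n s m =
  cadd (dinner r n s m) (cscale ((-1) ^+ r.+1)
    (oapp (fun c => F n (merge r c s) m) (czero f) (prodA (nth ba0 s r) (nth ba0 s r.+1)))).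
Proof. by apply: chain_ext => n' t' m'; rewrite /dinner /csum big_ord_recr. Qed.

End Faces.

Lemma dfirst_czero f n s m : dfirst (fun _ _ _ => czero f) n s m = czero f.
Proof. by apply: chain_ext => n' t' m'; apply: big1 => n'' _; rewrite /cscale mulr0. Qed.

Lemma eq_dfirst f (F G : BN -> seq BA -> BA -> chain f) n s s' m m' :
  nth ba0 s 0 = nth ba0 s' 0 -> (forall n'', F n'' (behead s) m = G n'' (behead s') m') ->
  dfirst F n s m = dfirst G n s' m'.
Proof.
move=> h0 hF; rewrite /dfirst h0; congr csum.
by apply: functional_extensionality => n''; rewrite hF.
Qed.

Lemma dinner0 f (F : BN -> seq BA -> BA -> chain f) n s m : dinner F 0 n s m = czero f.
Proof. by apply: chain_ext => n' t' m'; rewrite /dinner /csum big_ord0. Qed.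

Lemma dinner_czero f r n s m : dinner (fun _ _ _ => czero f) r n s m = czero f.
Proof.
apply: chain_ext => n' t' m'; apply: big1 => j _.
by rewrite /cscale oapp_chainE; case: prodA => [c|]; rewrite /= mulr0.
Qed.

Lemma eq_dinner f (F G : BN -> seq BA -> BA -> chain f) r n s s' m m' :
  (forall j, (j <= r)%N -> nth ba0 s j = nth ba0 s' j) ->
  (forall j c, (j < r)%N -> F n (merge j c s) m = G n (merge j c s') m') ->
  dinner F r n s m = dinner G r n s' m'.
Proof.
move=> hnth hF; rewrite /dinner; congr csum; apply: functional_extensionality => j.
have hj := ltn_ord j; rewrite (hnth j (ltnW hj)) (hnth j.+1 hj).
suff -> : (fun c => F n (merge j c s) m) = (fun c => G n (merge j c s') m') by [].
by apply: functional_extensionality => c; rewrite hF.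
Qed.

Section FacesMap.
Variables (e f : nat) (K : BN -> e.-tuple BA -> BA -> chain f).
Variable F : BN -> seq BA -> BA -> chain e.
Local Notation KF := (fun n s m => chain_map K (F n s m)).

Lemma chain_map_dfirst n s m : chain_map K (dfirst F n s m) = dfirst KF n s m.
Proof.
rewrite chain_map_csum; congr csum; apply: functional_extensionality => n''.
exact: chain_map_cscale.
Qed.

Lemma chain_map_dinner r n s m : chain_map K (dinner F r n s m) = dinner KF r n s m.
Proof.
rewrite chain_map_csum; congr csum; apply: functional_extensionality => j.
by rewrite chain_map_cscale chain_map_oapp.
Qed.

Lemma chain_map_dlast r n s m : chain_map K (dlast F r n s m) = dlast KF r n s m.
Proof. by rewrite chain_map_cscale chain_map_oapp. Qed.

End FacesMap.

Lemma bd_cdelta d n s m : size s = d.+1 -> bd (cdelta d.+1 n s m) =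
  cadd (cadd (dfirst (cdelta d) n s m) (dinner (cdelta d) d n s m)) (dlast (cdelta d) d n s m).
Proof.
move=> size_s; apply: chain_ext => n' t' m'.
rewrite bdE chain_map_delta /bcoef /dfirst /dinner /dlast /cadd /cscale /csum /=.
set T := Tuple _; have hT : val T = s by [].
congr (_ + _ + _).
- rewrite (bigD1 n') //= big1 ?addr0; last first.
    by move=> n0 hn; rewrite /cdelta eq_sym (negbTE hn) mulr0.
  by rewrite /cdelta eqxx /thead (tnth_nth ba0) hT.
- apply: eq_bigr => j _; congr (_ * _).
  have hj : (j < size s)%N by rewrite size_s ltnW // ltnS.
  have hj1 : (j.+1 < size s)%N by rewrite size_s ltnS.
  have h1 := onth_nth_lt ba0 hj1; rewrite /= in h1.
  rewrite (onth_nth_lt ba0 hj) h1.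
  rewrite (onth_nth_lt ba0 (_ : (j < size t')%N)) ?size_tuple //= mulA_prodA.
  case: (prodA _ _) => [c|] /=; last by rewrite mulr0.
  rewrite /cdelta -natrM -(merge_eq ba0 c _ hj1) ?size_tuple ?size_s //.
  rewrite [Some c == _]/eq_op /=; congr _%:R.
  by case: (n' == n); case: (m' == m); case: (take _ _ == _); case: (drop _ _ == _); case: (c == _).
- congr (_ * _); rewrite /= (tnth_nth ba0) hT mulA_prodA.
  case: (prodA _ _) => [c|] /=; last by rewrite mulr0.
  rewrite /cdelta -natrM [Some c == _]/eq_op /= [c == _]eq_sym; congr _%:R.
  by case: (n' == n); case: (m' == c); case: (_ == _).
Qed.

Lemma bd_cdelta_tuple e n (t : e.+1.-tuple BA) m : bd (cdelta e.+1 n (val t) m) = bcoef n t m.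
Proof.
rewrite bdE (chain_map_delta _ _ _ (size_tuple t)).
by rewrite (_ : Tuple _ = t) //; apply: val_inj.
Qed.

Lemma cdelta_neq e n s m n' (t' : e.-tuple BA) m' : m' != m -> cdelta e n s m n' t' m' = 0.
Proof. by move=> /negbTE h; rewrite /cdelta h andbF. Qed.

Lemma bd_cdelta_ideal d n s m n' t' m' : size s = d.+1 -> idealb m -> ~~ idealb m' ->
  bd (cdelta d.+1 n s m) n' t' m' = 0.
Proof.
move=> hs hm hm'; have hne : m' != m by apply: contraNneq hm' => ->.
rewrite bd_cdelta // /cadd /dfirst /dinner /dlast /csum /cscale oapp_chainE.
rewrite big1 ?add0r => [|n'' _]; last by rewrite cdelta_neq ?mulr0.
rewrite big1 ?add0r => [|j _]; last first.
  by rewrite oapp_chainE; case: prodA => [c|] /=; rewrite ?cdelta_neq ?mulr0.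
case e1: prodA => [c|] //=; last by rewrite mulr0.
by rewrite cdelta_neq ?mulr0 //; apply: contraNneq hm' => ->; apply: idealbMl e1 hm.
Qed.

(** * A contracting homotopy modulo (e) *)

Local Unset Implicit Arguments.
Definition hlift e (n : BN) (s : seq BA) (m : BA) : chain e.+1 :=
  cdelta e.+1 n (rcons s m) (idt m).

Definition hcorr e (n : BN) (s : seq BA) (m : BA) : chain e.+1 :=
  if s is x :: s1 then
    oapp (fun c => if idealb c then
            cdelta e.+1 n (rcons (rcons (belast x s1) (lfact c)) (rfact c)) (idt m)
          else czero e.+1)
      (czero e.+1) (prodA (last x s1) m)
  else czero e.+1.

Definition hlast e (n : BN) (s : seq BA) (m : BA) : chain e.+1 :=
  if idealb m then hlift e n s m else hcorr e n s m.

Definition hbasis e (n : BN) (s : seq BA) (m : BA) : chain e.+1 :=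
  if (size s == e) && ~~ idealb m then
    cscale ((-1) ^+ e.+1) (cadd (hlift e n s m) (cscale (-1) (hcorr e n s m)))
  else czero e.+1.

Definition homotopy e : chain e -> chain e.+1 :=
  chain_map (fun n t m => hbasis e n (val t) m).
Local Set Implicit Arguments.
Arguments homotopy {e}.

Lemma hcorr_rcons e n s a m : hcorr e n (rcons s a) m =
  oapp (fun c => if idealb c then
          cdelta e.+1 n (rcons (rcons s (lfact c)) (rfact c)) (idt m)
        else czero e.+1)
    (czero e.+1) (prodA a m).
Proof.
rewrite /hcorr; case hs: (rcons s a) => [|x s1]; first by case: s hs.
by have := lastI x s1; rewrite -hs => /rcons_inj[-> ->].
Qed.

Lemma homotopy_cdelta e n s m : homotopy (cdelta e n s m) = hbasis e n s m.
Proof.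
rewrite /homotopy; case/boolP: (size s == e) => hs.
  by rewrite (chain_map_delta _ _ _ (eqP hs)).
by rewrite chain_map_delta_size // /hbasis (negbTE hs).
Qed.

Lemma homotopy_bd_cdelta e n s m : size s = e.+1 ->
  homotopy (bd (cdelta e.+1 n s m)) =
  cadd (cadd (dfirst (hbasis e) n s m) (dinner (hbasis e) e n s m)) (dlast (hbasis e) e n s m).
Proof.
move=> hs; have hK : (fun n s m => homotopy (cdelta e n s m)) = hbasis e.
  by do 3 apply: functional_extensionality => ?; rewrite homotopy_cdelta.
rewrite bd_cdelta // /homotopy !chain_map_cadd chain_map_dfirst chain_map_dinner.
by rewrite chain_map_dlast -/homotopy hK.
Qed.

Lemma homotopy_ideal e (w : chain e) n t m :
  (forall n0 t0 m0, ~~ idealb m0 -> w n0 t0 m0 = 0) -> homotopy w n t m = 0.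
Proof.
move=> hw; apply: big1 => n0 _; apply: big1 => t0 _; apply: big1 => m0 _.
case/boolP: (idealb m0) => hm0; last by rewrite hw ?mul0r.
by rewrite /hbasis hm0 andbF mulr0.
Qed.

Lemma bd_hlift e n s m : size s = e.+1 ->
  bd (hlift e.+1 n s m) =
  cadd (cadd (cadd (dfirst (hlift e) n s m) (dinner (hlift e) e n s m)) (dlast (hlift e) e n s m))
       (cscale ((-1) ^+ e.+2) (cdelta e.+1 n s m)).
Proof.
case/lastP: s => [//|s0 a]; rewrite size_rcons => -[<-].
have hs : size (rcons s0 a) = (size s0).+1 by rewrite size_rcons.
rewrite {1}/hlift bd_cdelta ?size_rcons ?hs // dinnerS caddA.
have -> : dfirst (cdelta _) n (rcons (rcons s0 a) m) (idt m) =
          dfirst (hlift (size s0)) n (rcons s0 a) m.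
  by rewrite /dfirst nth_rcons_lt ?hs // behead_rcons ?hs.
have -> : dinner (cdelta _) (size s0) n (rcons (rcons s0 a) m) (idt m) =
          dinner (hlift (size s0)) (size s0) n (rcons s0 a) m.
  rewrite /dinner; congr csum; apply: functional_extensionality => j.
  have hj2 : (j.+2 <= size (rcons s0 a))%N by rewrite hs ltnS.
  rewrite [nth _ _ j]nth_rcons_lt 1?ltnW // [nth _ _ j.+1]nth_rcons_lt //.
  suff -> : (fun c => cdelta _ n (merge j c (rcons (rcons s0 a) m)) (idt m)) =
            (fun c => hlift (size s0) n (merge j c (rcons s0 a)) m) by [].
  by apply: functional_extensionality => c; rewrite (merge_rcons _ _ hj2).
have -> : dlast (cdelta _) (size s0).+1 n (rcons (rcons s0 a) m) (idt m) =
          cscale ((-1) ^+ (size s0).+2) (cdelta _ n (rcons s0 a) m).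
  by rewrite /dlast (nth_rcons_size _ _ hs) prodA_idt take_rcons_le ?hs // take_oversize ?hs.
have -> : nth ba0 (rcons (rcons s0 a) m) (size s0) = a.
  by rewrite nth_rcons_lt ?hs // nth_rcons_size //.
have -> : nth ba0 (rcons (rcons s0 a) m) (size s0).+1 = m by rewrite (nth_rcons_size _ _ hs).
rewrite /dlast take_rcons_le // take_size (nth_rcons_size _ _ (erefl (size s0))).
case e1: (prodA a m) => [c|]; cbn [oapp]; last by [].
have [_ _ u] := prodA_Some e1.
by rewrite (merge_rcons2 _ _ _ (erefl (size s0))) /hlift (eq_idt u).
Qed.

Section HbasisFaces.
Variables (e : nat) (n : BN) (s : seq BA) (m : BA) (n' : BN) (t' : e.+1.-tuple BA) (m' : BA).
Hypothesis size_s : size s = e.+1.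

Lemma dfirst_hbasis : ~~ idealb m ->
  dfirst (hbasis e) n s m n' t' m' =
  (-1) ^+ e.+1 * (dfirst (hlift e) n s m n' t' m' - dfirst (hcorr e) n s m n' t' m').
Proof.
move=> hm; rewrite /dfirst /csum /cscale -sumrB mulr_sumr; apply: eq_bigr => n'' _.
by rewrite /hbasis size_behead size_s eqxx hm /= /cadd /cscale; ring.
Qed.

Lemma dinner_hbasis : ~~ idealb m ->
  dinner (hbasis e) e n s m n' t' m' =
  (-1) ^+ e.+1 * (dinner (hlift e) e n s m n' t' m' - dinner (hcorr e) e n s m n' t' m').
Proof.
move=> hm; rewrite /dinner /csum /cscale -sumrB mulr_sumr; apply: eq_bigr => j _.
rewrite !oapp_chainE; case: prodA => [c|] /=; last by ring.
have hj : (j.+1 < size s)%N by rewrite size_s ltnS.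
by rewrite /hbasis size_merge // size_s eqxx hm /= /cadd /cscale; ring.
Qed.

Lemma dlast_hbasis :
  dlast (hbasis e) e n s m n' t' m' =
  (-1) ^+ e.+1 * (dlast (hlift e) e n s m n' t' m' - dlast (hlast e) e n s m n' t' m').
Proof.
rewrite /dlast /cscale !oapp_chainE; case: prodA => [c|] /=; last by ring.
rewrite /hbasis /hlast size_takel ?size_s // eqxx /=.
by case: (idealb c); rewrite /czero /cadd /cscale /=; ring.
Qed.

End HbasisFaces.

Lemma dinner_hcorr_inner e r n s a m : (r < size s)%N ->
  dinner (hcorr e) r n (rcons s a) m =
  oapp (fun c => if idealb c then
          dinner (cdelta e.+1) r n (rcons (rcons s (lfact c)) (rfact c)) (idt m)
        else czero e.+1)
    (czero e.+1) (prodA a m).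
Proof.
move=> hr; have hmerge j c : (j < r)%N -> merge j c (rcons s a) = rcons (merge j c s) a.
  by move=> hj; rewrite merge_rcons //; lia.
have hcorr0 : (forall j c, (j < r)%N -> hcorr e n (rcons (merge j c s) a) m = czero e.+1) ->
    dinner (hcorr e) r n (rcons s a) m = czero e.+1.
  move=> h; rewrite -(dinner_czero e.+1 r n (rcons s a) m).
  by apply: eq_dinner => // j c hj; rewrite hmerge // h.
case e1: (prodA a m) => [c|]; cbn [oapp]; last first.
  by apply: hcorr0 => j c hj; rewrite hcorr_rcons e1.
case: ifP => hc; last by apply: hcorr0 => j c' hj; rewrite hcorr_rcons e1 /= hc.
apply: eq_dinner => [j hj|j c' hj].
  by rewrite !nth_rcons_lt ?size_rcons //; lia.
rewrite hmerge // hcorr_rcons e1 /= hc !merge_rcons ?size_rcons //; lia.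
Qed.

Lemma hcorr_merge_last e n s a' a m :
  oapp (fun c' => hcorr e n (rcons s c') m) (czero e.+1) (prodA a' a) =
  oapp (fun c => if idealb c then
          oapp (fun c' => cdelta e.+1 n (rcons (rcons s c') (rfact c)) (idt m))
            (czero e.+1) (prodA a' (lfact c))
        else hcorr e n (rcons s a') c)
    (czero e.+1) (prodA a m).
Proof.
case e1: (prodA a m) => [c|]; cbn [oapp]; last first.
  case e2: (prodA a' a) => [c'|]; cbn [oapp]; last by [].
  by rewrite hcorr_rcons (prodA_undefr e1 e2).
have [_ _ u1] := prodA_Some e1.
case: ifP => hc; case e2: (prodA a' a) => [c'|]; cbn [oapp].
- have [f [hf1 hf2]] := prodA_assoc e1 e2; have [_ _ uf] := prodA_Some hf2.
  rewrite hcorr_rcons hf1 (prodA_lfact hc hf2); cbn [oapp].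
  by rewrite (idealbMl hf2 hc) (eq_rfact uf).
- by rewrite (prodA_lfact_undef e1 hc e2).
- have [f [hf1 hf2]] := prodA_assoc e1 e2.
  by rewrite !hcorr_rcons hf1 hf2; cbn [oapp]; rewrite (eq_idt u1).
- by rewrite hcorr_rcons (prodA_undefl e1 e2).
Qed.

Lemma dinner_hcorr e n s a m : size s = e ->
  dinner (hcorr e) e n (rcons s a) m =
  oapp (fun c => if idealb c then
          dinner (cdelta e.+1) e n (rcons (rcons s (lfact c)) (rfact c)) (idt m)
        else cscale ((-1) ^+ e) (hcorr e n s c))
    (czero e.+1) (prodA a m).
Proof.
case/lastP: s => [|s a']; rewrite ?size_rcons => <-.
  rewrite dinner0; case: (prodA a m) => [c|] //; cbn [oapp].
  by case: ifP => _; rewrite ?dinner0 //= cscale0.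
have hs : size (rcons s a') = (size s).+1 by rewrite size_rcons.
rewrite dinnerS dinner_hcorr_inner ?hs //.
have -> : nth ba0 (rcons (rcons s a') a) (size s) = a'.
  by rewrite nth_rcons_lt ?hs // nth_rcons_size.
have -> : nth ba0 (rcons (rcons s a') a) (size s).+1 = a by rewrite (nth_rcons_size _ _ hs).
have -> : (fun c' => hcorr (size s).+1 n (merge (size s) c' (rcons (rcons s a') a)) m) =
          (fun c' => hcorr (size s).+1 n (rcons s c') m).
  by apply: functional_extensionality => c'; rewrite merge_rcons2 //.
rewrite hcorr_merge_last; case: (prodA a m) => [c|]; cbn [oapp]; last by rewrite add0c cscale0.
case: ifP => hc; last by rewrite add0c.
rewrite dinnerS.
have -> : nth ba0 (rcons (rcons (rcons s a') (lfact c)) (rfact c)) (size s) = a'.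
  by rewrite nth_rcons_lt ?size_rcons // nth_rcons_lt ?size_rcons // nth_rcons_size //.
have -> : nth ba0 (rcons (rcons (rcons s a') (lfact c)) (rfact c)) (size s).+1 = lfact c.
  by rewrite nth_rcons_lt ?size_rcons // (nth_rcons_size _ _ hs).
suff -> : (fun c' => cdelta (size s).+2 n
             (merge (size s) c' (rcons (rcons (rcons s a') (lfact c)) (rfact c))) (idt m)) =
          (fun c' => cdelta (size s).+2 n (rcons (rcons s c') (rfact c)) (idt m)) by [].
by apply: functional_extensionality => c'; rewrite merge_rcons3.
Qed.

Lemma bd_cdelta_fact e n s c E n' t' m' : size s = e -> idealb c -> ~~ idealb m' ->
  bd (cdelta e.+2 n (rcons (rcons s (lfact c)) (rfact c)) E) n' t' m' =
  cadd (cadd (dfirst (cdelta e.+1) n (rcons (rcons s (lfact c)) (rfact c)) E)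
             (dinner (cdelta e.+1) e n (rcons (rcons s (lfact c)) (rfact c)) E))
       (cscale ((-1) ^+ e.+1) (cdelta e.+1 n (rcons s c) E)) n' t' m'.
Proof.
move=> hs hc hm'; have hs1 : size (rcons s (lfact c)) = e.+1 by rewrite size_rcons hs.
rewrite bd_cdelta ?size_rcons ?hs // dinnerS caddA /cadd; cbv beta.
have -> : dlast (cdelta e.+1) e.+1 n (rcons (rcons s (lfact c)) (rfact c)) E n' t' m' = 0.
  rewrite /dlast /cscale oapp_chainE (nth_rcons_size _ _ hs1).
  case e1: prodA => [c'|] /=; last by rewrite mulr0.
  rewrite cdelta_neq ?mulr0 //; apply: contraNneq hm' => ->.
  exact: idealbMr e1 (idealb_rfact c).
rewrite addr0; congr (_ + _).
rewrite /cscale oapp_chainE nth_rcons_lt ?hs1 // (nth_rcons_size _ _ hs) (nth_rcons_size _ _ hs1).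
by rewrite (prodA_fact hc); cbn [oapp]; rewrite (merge_rcons2 _ _ _ hs).
Qed.

Section VanishingDiagonal.
Hypothesis rdim_diag : forall y : IntP P, is_diag y -> rdim N y = 0.

Lemma actN_diag (n n'' : BN) (p : BA) : is_diag (tgt p) -> actN n p n'' = 0.
Proof.
move=> hp; rewrite /actN; case: andP => // [[_ /eqP ht]].
have hdiag : is_diag (tag n'') by rewrite ht.
by have := leq_trans (ltn_ord (tagged n'')) (eq_leq (rdim_diag hdiag)); rewrite ltn0.
Qed.

Lemma dfirst_hcorr e n s a m :
  dfirst (hcorr e) n (rcons s a) m =
  oapp (fun c => if idealb c then
          dfirst (cdelta e.+1) n (rcons (rcons s (lfact c)) (rfact c)) (idt m)
        else czero e.+1)
    (czero e.+1) (prodA a m).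
Proof.
have hcorr0 : (forall n'', hcorr e n'' (behead (rcons s a)) m = czero e.+1) ->
    dfirst (hcorr e) n (rcons s a) m = czero e.+1.
  by move=> h; rewrite -(dfirst_czero e.+1 n (rcons s a) m); apply: eq_dfirst.
case e1: (prodA a m) => [c|]; cbn [oapp]; last first.
  by apply: hcorr0 => n''; case: s => [|x s] //=; rewrite hcorr_rcons e1.
case: ifP => hc.
  case: s hcorr0 => [|x s] hcorr0; last first.
    by apply: eq_dfirst => //= n''; rewrite hcorr_rcons e1 /= hc.
  (* For [s = [::]] the first face acts by [lfact c], whose target is diagonal. *)
  rewrite hcorr0 //; apply: chain_ext => n' t' m'; apply/esym/big1 => n'' _.
  by rewrite /cscale actN_diag ?mul0r // is_diag_tgt_lfact.
by apply: hcorr0 => n''; case: s => [|x s] //=; rewrite hcorr_rcons e1 /= hc.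
Qed.

Lemma bd_hcorr e n s m n' t' m' : size s = e.+1 -> ~~ idealb m' ->
  bd (hcorr e.+1 n s m) n' t' m' =
  cadd (cadd (dfirst (hcorr e) n s m) (dinner (hcorr e) e n s m)) (dlast (hlast e) e n s m)
    n' t' m'.
Proof.
case/lastP: s => [//|s a]; rewrite size_rcons => -[hs] hm'.
rewrite hcorr_rcons bd_oapp dfirst_hcorr (@dinner_hcorr e n s a m hs) /dlast.
rewrite (nth_rcons_size _ _ hs) take_rcons_le; last by rewrite hs.
rewrite take_oversize; last by rewrite hs.
case e1: (prodA a m) => [c|]; cbn [oapp]; last by rewrite /cadd /cscale /czero mulr0 !addr0.
have [_ _ u] := prodA_Some e1.
case: ifP => hc; last by rewrite bd_czero /cadd /cscale /czero /hlast hc exprS; ring.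
by rewrite bd_cdelta_fact // /hlast hc /hlift (eq_idt u).
Qed.

Lemma bdH_Hbd_cdelta e n s m n' t' m' : size s = e.+1 -> ~~ idealb m' ->
  bd (hbasis e.+1 n s m) n' t' m' + homotopy (bd (cdelta e.+1 n s m)) n' t' m' =
  cdelta e.+1 n s m n' t' m'.
Proof.
move=> hs hm'; case/boolP: (idealb m) => hm.
  rewrite /hbasis hm andbF bd_czero homotopy_ideal => [|n0 t0 m0]; last exact: bd_cdelta_ideal.
  by rewrite cdelta_neq ?addr0 //; apply: contraNneq hm' => ->.
rewrite (@homotopy_bd_cdelta e n s m hs) /hbasis hs eqxx hm /=.
rewrite bd_cscale bd_cadd bd_cscale /cadd /cscale (@bd_hlift e n s m hs).
rewrite (@bd_hcorr e n s m _ _ _ hs hm').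
rewrite /cadd /cscale (@dfirst_hbasis e n s m _ _ _ hs hm) (@dinner_hbasis e n s m _ _ _ hs hm).
rewrite (@dlast_hbasis e n s m _ _ _ hs).
rewrite !exprS; set z := (-1) ^+ e.
have z2 : z * z = 1 by rewrite -exprMn mulrNN mulr1 expr1n.
transitivity (z * z * cdelta e.+1 n s m n' t' m'); first ring.
by rewrite z2 mul1r.
Qed.

Lemma bdH_Hbd e (v : chain e.+1) n t m :
  ~~ idealb m -> bd (homotopy v) n t m + homotopy (bd v) n t m = v n t m.
Proof.
move=> hm; rewrite {1}/homotopy bdE chain_map_comp /homotopy bdE chain_map_comp chain_map_add.
rewrite -{2}(chain_map_cdelta v); apply: eq_chain_map_at => n0 t0 m0.
rewrite /cadd -bd_cdelta_tuple.
have hs : size (val t0) = e.+1 by rewrite size_tuple.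
exact: (@bdH_Hbd_cdelta e n0 (val t0) m0 n t m hs hm).
Qed.

End VanishingDiagonal.

End BarComplex.
Arguments homotopy {k disp P N e}.

Lemma rdim_diag_eq0 (k : fieldType) (disp : Order.disp_t) (P : finPOrderType disp)
    (N : rep k P) :
  (forall s t : IntP P, leinf (val s).2 (val t).1 -> rmap N s t = 0) ->
  forall y : IntP P, is_diag y -> rdim N y = 0.
Proof.
move=> hN y /eqP hy; have := rmap_id N y; rewrite hN; last by rewrite hy leinf_refl.
case: (rdim N y) => [//|r] /matrixP/(_ ord0 ord0).
by rewrite !mxE eqxx => /esym/eqP; rewrite oner_eq0.
Qed.

Theorem propositionA7 (k : fieldType) (disp : Order.disp_t)
  (P : finPOrderType disp) (N : rep k P)
  (hN : forall s t : IntP P, leinf (val s).2 (val t).1 -> rmap N s t = 0)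
  (d : nat) (hd : (0 < d)%N) :
  TorVanish N d.
Proof.
case: d hd => [|e] // _ v hv.
exists (homotopy v) => n t; apply/inIP => m hm /=.
have hbv n1 t1 := (inIP _).1 (hv n1 t1).
rewrite -(bdH_Hbd (rdim_diag_eq0 hN) v n t hm) addrC addKr.
exact: homotopy_ideal hbv.
Qed.
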